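(* With the setup in the context, assume $Q>2m$ and $Q\ge1$. Choose $N$ so that $v_1:=v\in N$ and every non-fixed vertex $x$ with $\mathrm{dist}(v_1,x)<\mathrm{dist}(v_1',x)$ lies in $N$ (vertices with $\mathrm{dist}(v_1,x)=\mathrm{dist}(v_1',x)$ may be placed arbitrarily). Label $N=\{v_1,\dots,v_k\}$ and define $y\in\mathbb{R}^k$ by $$y_i=\begin{cases}Q^{-\mathrm{dist}(v_1,v_i)} & \text{if } \mathrm{dist}(v_1,v_i)<\mathrm{dist}(v_1',v_i),\\ 0 & \text{if } \mathrm{dist}(v_1,v_i)=\mathrm{dist}(v_1',v_i).\end{cases}$$ Then the second largest eigenvalue $\lambda_2$ of $H$ satisfies $$\lambda_2\ \ge\ Q-\frac{1+\sum_{i\ne 1}\big(\deg_{N\cup\sigma N}(v_i)-1\big)y_i^2}{\sum_i y_i^2}.$$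
   Context: $G$ is a finite, simple, connected graph with vertex set $V$, maximum degree $m$, and an involution $\sigma$ (a bijection $V\to V$ with $\sigma\circ\sigma=\mathrm{id}$ such that $x\sim y$ implies $\sigma(x)\sim\sigma(y)$); write $x'=\sigma(x)$. Fix $v\in V$ with $v'\ne v$, and let $H=A_G+D_Q$ (adjacency matrix plus diagonal potential) with potential $Q$ at $v$ and $v'$ and $0$ elsewhere. $S=\{x: x'=x\}$ is the set of fixed vertices, $N$ is a set containing exactly one vertex from each pair $\{x,x'\}$ with $x\ne x'$, $|N|=k$, and $\sigma N=\{x':x\in N\}$. $\mathrm{dist}$ is graph distance and $\deg_{N\cup\sigma N}(v_i)$ is the number of neighbours of $v_i$ in $N\cup\sigma N$. The eigenvalues of $H$ are $\lambda_1\ge\lambda_2\ge\dots\ge\lambda_n$. *)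

From mathcomp Require Import all_boot all_order all_algebra.
Set Implicit Arguments. Unset Strict Implicit. Unset Printing Implicit Defensive.
Import Order.TTheory GRing.Theory Num.Theory.
Local Open Scope ring_scope.

Definition simple_graph n (e : rel 'I_n) : Prop :=
  symmetric e /\ irreflexive e.

Definition connected_graph n (e : rel 'I_n) : Prop :=
  forall x y, connect e x y.

Fixpoint ball n (e : rel 'I_n) (k : nat) (x : 'I_n) : {set 'I_n} :=
  match k with
  | 0 => [set x]
  | k'.+1 => ball e k' x :|: [set z | [exists w in ball e k' x, e w z]]
  end.

(* graph distance: least k with y in ball e k x (for a connected graph, k < n) *)
Definition dist n (e : rel 'I_n) (x y : 'I_n) : nat :=
  find (fun k => y \in ball e k x) (iota 0 n).

Definition degree n (e : rel 'I_n) (x : 'I_n) : nat := #|[set z | e x z]|.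

Definition max_degree n (e : rel 'I_n) : nat := \max_(x : 'I_n) degree e x.

Definition deg_in n (e : rel 'I_n) (A : {set 'I_n}) (x : 'I_n) : nat :=
  #|[set z in A | e x z]|.

Definition graph_involution n (e : rel 'I_n) (s : 'I_n -> 'I_n) : Prop :=
  involutive s /\ (forall x y, e x y -> e (s x) (s y)).

Definition adj_mx (R : nzRingType) n (e : rel 'I_n) : 'M[R]_n :=
  \matrix_(i, j) (e i j)%:R.

Definition Hmx (R : nzRingType) n (e : rel 'I_n) (s : 'I_n -> 'I_n)
  (v : 'I_n) (Q : R) : 'M[R]_n :=
  adj_mx R e + \matrix_(i, j) (((i == j) && ((i == v) || (i == s v)))%:R * Q).

(* s is the list of eigenvalues (with algebraic multiplicity) of A *)
Definition is_spectrum (R : nzRingType) n (A : 'M[R]_n) (s : seq R) : Prop :=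
  char_poly A = \prod_(a <- s) ('X - a%:P).

(* i-th largest eigenvalue (0-based): lambda_{i+1} *)
Definition eig_desc (R : realDomainType) (s : seq R) (i : nat) : R :=
  nth 0 (sort (fun a b : R => b <= a) s) i.

From mathcomp Require Import all_boot all_order all_algebra.
From mathcomp Require Import complex.
From mathcomp Require Import ring lra.

Set Implicit Arguments.
Unset Strict Implicit.
Unset Printing Implicit Defensive.

Import Order.TTheory GRing.Theory Num.Theory.

(* Courant-Fischer: lambda_2 >= c as soon as H has two nonzero test vectors that are
   orthogonal and H-orthogonal and whose Rayleigh quotients are at least c.  Since sigma
   commutes with H, every sigma-odd vector is orthogonal and H-orthogonal to every
   sigma-even one.  The even vector 1_v + 1_v' has Rayleigh quotient Q + [v ~ v'] >= Q.
   The odd vector z equal to y on N, to -y(x') on sigma N and to 0 on fixed vertices has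
   <z, Hz> = 2 (sum_{x,b in N} (A_xb - A_xb') y_x y_b + Q) and |z|^2 = 2 sum_N y^2.  In the
   direct part every x <> v in the support of y has a neighbour p in N one step closer to
   v, so that y_p >= Q y_x; the cross part is bounded by AM-GM, the only cross edge
   carrying weight at v being v ~ v'. *)

(** * Graph distance *)

Section Distance.
Variables (n : nat) (e : rel 'I_n).

Lemma ball_mono k k' a : k <= k' -> ball e k a \subset ball e k' a.
Proof.
move=> /subnK <-; elim: (k' - k) => [|m IH] //=.
exact: subset_trans IH (subsetUl _ _).
Qed.

Lemma ball_edge k a p x : p \in ball e k a -> e p x -> x \in ball e k.+1 a.
Proof.
by move=> pk epx; rewrite /= !inE; apply/orP; right; apply/existsP; exists p; rewrite pk.
Qed.

Lemma dist_le_n a x : dist e a x <= n.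
Proof. by rewrite /dist -[X in _ <= X](size_iota 0 n) find_size. Qed.

Lemma dist_le a x k : x \in ball e k a -> dist e a x <= k.
Proof.
move=> xk; have [kn|/(leq_trans (dist_le_n a x))//] := ltnP k n.
rewrite leqNgt; apply/negP => /(before_find 0).
by rewrite nth_iota // add0n xk.
Qed.

Lemma mem_ball_dist a x : dist e a x < n -> x \in ball e (dist e a x) a.
Proof.
move=> dn; have : has (fun k => x \in ball e k a) (iota 0 n).
  by rewrite has_find size_iota.
by move=> /(nth_find 0); rewrite nth_iota.
Qed.

Lemma dist_eq0 a x : (dist e a x == 0) = (x == a).
Proof.
apply/idP/eqP => [/eqP d0 | ->]; last by rewrite -leqn0 dist_le //= inE.
have := @mem_ball_dist a x; rewrite d0 /= inE => /(_ (leq_ltn_trans (leq0n _) (ltn_ord a))).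
by move/eqP.
Qed.

Lemma dist_edge a p x : e p x -> dist e a x <= (dist e a p).+1.
Proof.
move=> epx; have [pn|] := ltnP (dist e a p) n.
  exact/dist_le/(ball_edge (mem_ball_dist pn)).
by move/(leq_trans (dist_le_n a x))/leqW.
Qed.

Lemma dist_parent a x : 0 < dist e a x < n -> exists2 p, e p x & dist e a p < dist e a x.
Proof.
case/andP=> d0 dn; have := mem_ball_dist dn.
case def_d : (dist e a x) d0 => [|d] // _ /= /setUP[/dist_le | ].
  by rewrite def_d ltnn.
rewrite inE => /existsP[p /andP[pd epx]]; exists p => //.
exact: leq_ltn_trans (dist_le pd) (ltnSn d).
Qed.

Lemma ball_hom (s : 'I_n -> 'I_n) k a x :
  (forall b c, e b c -> e (s b) (s c)) -> x \in ball e k a -> s x \in ball e k (s a).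
Proof.
move=> hom; elim: k x => [|k IH] x /=; first by rewrite !inE => /eqP ->.
case/setUP => [/IH /(subsetP (ball_mono (s a) (leqnSn k))) // | ].
by rewrite inE => /existsP[p /andP[pk epx]]; exact: ball_edge (IH _ pk) (hom _ _ epx).
Qed.

Lemma dist_hom (s : 'I_n -> 'I_n) a x :
  (forall b c, e b c -> e (s b) (s c)) -> dist e (s a) (s x) <= dist e a x.
Proof.
move=> hom; have [dn|/(leq_trans (dist_le_n _ _))//] := ltnP (dist e a x) n.
exact/dist_le/ball_hom/mem_ball_dist.
Qed.

End Distance.

Local Open Scope ring_scope.

(** * The test weight *)

Definition dist_weight (R : fieldType) n (e : rel 'I_n) (a b : 'I_n) (Q : R) (x : 'I_n) : R :=
  if (dist e a x < dist e b x)%N then Q ^- dist e a x else 0.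

Section DistWeight.
Variables (R : realFieldType) (n : nat) (e : rel 'I_n) (s : 'I_n -> 'I_n).
Variables (v : 'I_n) (Q : R) (N : {set 'I_n}).
Hypotheses (esym : symmetric e) (sK : involutive s).
Hypotheses (s_hom : forall a b, e a b -> e (s a) (s b)) (sv : s v != v) (Q_ge1 : 1 <= Q).
Hypothesis N_closed : forall x, s x != x -> (dist e v x < dist e (s v) x)%N -> x \in N.
Local Notation y := (dist_weight e v (s v) Q).

Let Q_gt0 : 0 < Q. Proof. exact: lt_le_trans ltr01 Q_ge1. Qed.

Lemma dist_weight_ge0 x : 0 <= y x.
Proof. by rewrite /dist_weight; case: ifP => // _; rewrite invr_ge0 exprn_ge0 // ltW. Qed.

Lemma dist_weight_src : y v = 1.
Proof.
have dv0 : dist e v v = 0%N by apply/eqP; rewrite dist_eq0.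
by rewrite /dist_weight dv0 lt0n dist_eq0 eq_sym (negbTE sv) expr0 invr1.
Qed.

Lemma dist_weight_parent x : x != v -> y x != 0 ->
  exists2 p, p \in N & e x p && (Q * y x <= y p).
Proof.
rewrite /dist_weight => xv; case: ifP => [lt_x _|]; last by rewrite eqxx.
have [p epx lt_p] : exists2 p, e p x & (dist e v p < dist e v x)%N.
  by apply: dist_parent; rewrite lt0n dist_eq0 xv (leq_trans lt_x (dist_le_n _ _ _)).
have lt_p' : (dist e v p < dist e (s v) p)%N.
  by rewrite -ltnS (leq_trans (leq_ltn_trans lt_p lt_x) (dist_edge (s v) epx)).
have sp : s p != p.
  (* A fixed vertex is at the same distance from v and from v'. *)
  apply: contraTneq lt_p' => spp; rewrite -leqNgt.
  by have := dist_hom v p s_hom; rewrite spp.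
exists p; first exact: N_closed.
rewrite esym epx lt_p' /=.
case: (dist e v x) lt_p => // d lt_p.
rewrite exprS invfM mulrA mulfV ?gt_eqF // mul1r.
by rewrite lef_pV2 ?posrE ?exprn_gt0 // ler_weXn2l.
Qed.

Lemma dist_weight_sigma_nbr b : b != v -> e v (s b) -> y b = 0.
Proof.
move=> bv evb; rewrite /dist_weight; case: ifP => // lt_b.
have : (dist e (s v) b <= 1)%N.
  by apply: dist_le; apply: (ball_edge (p := s v)); rewrite /= ?inE // -[b]sK s_hom.
move=> /(leq_trans lt_b); rewrite ltnS leqn0 dist_eq0 => /eqP bv'.
by rewrite bv' eqxx in bv.
Qed.

End DistWeight.

(** * Quadratic forms of odd and even vectors under an involution *)

Lemma form_sum (R : comNzRingType) n (X Y : 'rV[R]_n) (M : 'M[R]_n) :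
  (X *m M *m Y^T) 0 0 = \sum_i X 0 i * \sum_j M i j * Y 0 j.
Proof.
rewrite -mulmxA mxE; apply: eq_bigr => i _; congr (_ * _).
by rewrite mxE; apply: eq_bigr => j _; rewrite mxE.
Qed.

Lemma sum_delta2 (R : pzSemiRingType) (I : finType) (A : {pred I}) (v : I)
  (F : I -> I -> R) :
  v \in A -> \sum_(x in A) \sum_(b in A) ((x == v) && (b == v))%:R * F x b = F v v.
Proof.
move=> vA; rewrite (bigD1 v) //= [X in _ + X]big1 => [|x /andP[_ /negbTE xv]]; last first.
  by rewrite big1 // => b _; rewrite xv mul0r.
rewrite addr0 (bigD1 v) //= [X in _ + X]big1 => [|b /andP[_ /negbTE bv]]; last first.
  by rewrite bv andbF mul0r.
by rewrite eqxx mul1r addr0.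
Qed.

Definition pair_row (R : nzRingType) n (a b : 'I_n) : 'rV[R]_n :=
  \row_x ((x == a) || (x == b))%:R.

Lemma form_pair_row (R : comNzRingType) n (a b : 'I_n) (M : 'M[R]_n) : a != b ->
  (pair_row R a b *m M *m (pair_row R a b)^T) 0 0 = M a a + M a b + (M b a + M b b).
Proof.
move=> ab; have pair_sum (F : 'I_n -> R) : \sum_i ((i == a) || (i == b))%:R * F i = F a + F b.
  rewrite (bigD1 a) //= (bigD1 b) /=; last by rewrite eq_sym.
  rewrite !eqxx orbT !mul1r big1 ?addr0 // => i /andP[/negbTE -> /negbTE ->].
  by rewrite mul0r.
have pr i : pair_row R a b 0 i = ((i == a) || (i == b))%:R by rewrite mxE.
rewrite form_sum; under eq_bigr do rewrite pr; rewrite pair_sum.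
by congr (_ + _); rewrite -pair_sum; apply: eq_bigr => j _; rewrite pr mulrC.
Qed.

Lemma dot_pair_row (R : comNzRingType) n (a b : 'I_n) :
  a != b -> (pair_row R a b *m (pair_row R a b)^T) 0 0 = 2.
Proof.
move=> ab; rewrite -[X in X *m _]mulmx1 form_pair_row // !mxE !eqxx (eq_sym b a) (negbTE ab).
by rewrite addr0 add0r.
Qed.

Section InvolutionForms.
Variables (R : numDomainType) (n : nat) (s : 'I_n -> 'I_n) (N : {set 'I_n}).
Hypotheses (sK : involutive s) (sN : forall x, x \in N -> s x \notin N).

Let s_inj : injective s. Proof. exact: inv_inj. Qed.

Lemma sum_involution_split (F : 'I_n -> R) :
  \sum_x F x = \sum_(x in N) F x + \sum_(x in N) F (s x)
               + \sum_(x | (x \notin N) && (s x \notin N)) F x.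
Proof.
rewrite (bigID (mem N)) /= -addrA; congr (_ + _).
rewrite (bigID (fun x => s x \in N)) /=; congr (_ + _).
rewrite (reindex_inj s_inj) /=; apply: eq_bigl => x; rewrite sK.
by case: (boolP (x \in N)) => [/sN/negbTE -> | _]; rewrite ?andbF.
Qed.

Definition odd_ext (f : 'I_n -> R) : 'rV[R]_n :=
  \row_x (if x \in N then f x else if s x \in N then - f (s x) else 0).

Lemma odd_ext_sigma f x : odd_ext f 0 (s x) = - odd_ext f 0 x.
Proof.
rewrite !mxE sK; case: (boolP (x \in N)) => [/sN/negbTE -> // | _].
by case: ifP; rewrite ?opprK ?oppr0.
Qed.

Lemma odd_ext_out f x : x \notin N -> s x \notin N -> odd_ext f 0 x = 0.
Proof. by rewrite mxE => /negbTE -> /negbTE ->. Qed.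

Lemma form_odd_even (M : 'M[R]_n) (u w : 'rV[R]_n) :
  (forall i j, M (s i) (s j) = M i j) ->
  (forall x, u 0 (s x) = - u 0 x) -> (forall x, w 0 (s x) = w 0 x) ->
  (u *m M *m w^T) 0 0 = 0.
Proof.
move=> Ms us ws; rewrite form_sum; set S := \sum_i _.
have : S = - S.
  rewrite {1}/S (reindex_inj s_inj) /= -sumrN; apply: eq_bigr => i _.
  rewrite (reindex_inj s_inj) us mulNr; congr (- (_ * _)).
  by apply: eq_bigr => j _; rewrite Ms ws.
by move/eqP; rewrite -subr_eq0 opprK -mulr2n mulrn_eq0 => /eqP.
Qed.

Lemma row_odd_ext_sum (M : 'M[R]_n) f x :
  \sum_j M x j * odd_ext f 0 j = \sum_(b in N) (M x b - M x (s b)) * f b.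
Proof.
rewrite sum_involution_split [X in _ + X]big1 => [|b /andP[bN sbN]]; last first.
  by rewrite odd_ext_out ?mulr0.
rewrite addr0 -big_split /=; apply: eq_bigr => b bN.
by rewrite odd_ext_sigma mulrN mxE bN mulrBl.
Qed.

Lemma form_odd_ext (M : 'M[R]_n) f :
  (forall i j, M (s i) (s j) = M i j) ->
  (odd_ext f *m M *m (odd_ext f)^T) 0 0 =
    (\sum_(x in N) \sum_(b in N) (M x b - M x (s b)) * (f x * f b)) *+ 2.
Proof.
move=> Ms; set z := odd_ext f.
have row_sigma x : \sum_j M (s x) j * z 0 j = - \sum_j M x j * z 0 j.
  rewrite (reindex_inj s_inj) /= -sumrN; apply: eq_bigr => j _.
  by rewrite Ms odd_ext_sigma mulrN.
rewrite form_sum sum_involution_split.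
rewrite [X in _ + X]big1 => [|x /andP[xN sxN]]; last by rewrite odd_ext_out ?mul0r.
rewrite addr0 mulr2n.
under [X in _ + X]eq_bigr do rewrite odd_ext_sigma row_sigma mulrNN.
by congr (_ + _); apply: eq_bigr => x xN;
  rewrite row_odd_ext_sum mulr_sumr mxE xN; apply: eq_bigr => b _; rewrite mulrCA.
Qed.

Lemma dot_odd_ext f :
  (odd_ext f *m (odd_ext f)^T) 0 0 = (\sum_(x in N) f x ^+ 2) *+ 2.
Proof.
have s1 i j : (1%:M : 'M[R]_n) (s i) (s j) = 1%:M i j by rewrite !mxE (inj_eq s_inj).
rewrite -[X in X *m _]mulmx1 form_odd_ext //; congr (_ *+ 2); apply: eq_bigr => x xN.
have xs b : b \in N -> (x == s b) = false.
  by move=> bN; apply: contraNF (sN bN) => /eqP <-.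
rewrite (bigD1 x) //= big1 => [|b /andP[bN bx]]; last first.
  by rewrite !mxE xs // eq_sym (negbTE bx) subrr mul0r.
by rewrite !mxE eqxx xs // subr0 mul1r addr0 expr2.
Qed.

Lemma pair_row_sigma v x : pair_row R v (s v) 0 (s x) = pair_row R v (s v) 0 x.
Proof. by rewrite !mxE -[s x == v](inj_eq s_inj) sK (inj_eq s_inj) orbC. Qed.

Lemma deg_in_involution (e : rel 'I_n) x :
  (deg_in e (N :|: s @: N) x)%:R =
    \sum_(b in N) (e x b)%:R + \sum_(b in N) (e x (s b))%:R :> R.
Proof.
rewrite /deg_in -sum1_card natr_sum big_mkcond /= sum_involution_split.
rewrite [X in _ + X]big1 ?addr0 => [|z /andP[zN szN]]; last first.
  rewrite inE in_setU (negbTE zN) /=; case: ifP => // /andP[/imsetP[b bN zb] _].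
  by rewrite zb sK bN in szN.
congr (_ + _); apply: eq_bigr => b bN; rewrite !inE ?bN //=.
  by case: (e x b).
by rewrite imset_f ?orbT; case: (e x (s b)).
Qed.

Lemma dot_odd_even (u w : 'rV[R]_n) :
  (forall x, u 0 (s x) = - u 0 x) -> (forall x, w 0 (s x) = w 0 x) -> (u *m w^T) 0 0 = 0.
Proof.
move=> us ws; rewrite -[X in X *m _]mulmx1 form_odd_even // => i j.
by rewrite !mxE (inj_eq s_inj).
Qed.

End InvolutionForms.

(** * The Rayleigh quotient of the odd test vector *)

Lemma sum_sym_form_le (R : realFieldType) (I : finType) (P : pred I)
  (a : I -> I -> R) (f : I -> R) :
  (forall i j, a i j = a j i) -> (forall i j, 0 <= a i j) ->
  \sum_(i | P i) \sum_(j | P j) a i j * (f i * f j)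
    <= \sum_(i | P i) (\sum_(j | P j) a i j) * f i ^+ 2.
Proof.
move=> a_sym a_ge0.
pose half i j := a i j * f i ^+ 2 / 2.
apply: (@le_trans _ _ (\sum_(i | P i) \sum_(j | P j) (half i j + half j i))).
  apply: ler_sum => i _; apply: ler_sum => j _; rewrite /half a_sym -mulrDl -mulrDr.
  rewrite -mulrA ler_wpM2l //; have := sqr_ge0 (f i - f j); nra.
rewrite (eq_bigr _ (fun i _ => big_split _ _ _ _ _)) big_split /= [X in _ + X]exchange_big /=.
rewrite -big_split /=; apply: ler_sum => i _; rewrite mulr_suml -big_split /=.
by apply: ler_sum => j _; rewrite /half; lra.
Qed.

Lemma hom_involution_swap n (e : rel 'I_n) (s : 'I_n -> 'I_n) :
  symmetric e -> involutive s -> (forall a b, e a b -> e (s a) (s b)) ->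
  forall x b, e x (s b) = e b (s x).
Proof. by move=> esym sK hom x b; apply/idP/idP => /hom; rewrite sK esym. Qed.

Definition lambda2_bound (R : fieldType) n (e : rel 'I_n) (s : 'I_n -> 'I_n)
  (N : {set 'I_n}) (v : 'I_n) (y : 'I_n -> R) (Q : R) : R :=
  Q - (1 + \sum_(x in N | x != v) ((deg_in e (N :|: s @: N) x)%:R - 1) * y x ^+ 2)
        / \sum_(x in N) y x ^+ 2.

Section TestVector.
Variables (R : realFieldType) (n : nat) (e : rel 'I_n) (s : 'I_n -> 'I_n).
Variables (N : {set 'I_n}) (v : 'I_n) (y : 'I_n -> R) (Q : R).
Hypotheses (esym : symmetric e) (sK : involutive s).
Hypotheses (s_hom : forall a b, e a b -> e (s a) (s b)).
Hypotheses (sN : forall x, x \in N -> s x \notin N) (vN : v \in N).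
Hypotheses (y_ge0 : forall x, 0 <= y x) (y_v : y v = 1).
Hypothesis y_parent :
  forall x, x != v -> y x != 0 -> exists2 p, p \in N & e x p && (Q * y x <= y p).
Hypothesis y_sigma_nbr : forall b, b != v -> e v (s b) -> y b = 0.

Let nbr x : R := \sum_(b in N) (e x b)%:R.
Let cross x : R := \sum_(b in N) (e x (s b))%:R.

Let nbr_ge1 x : x \in N -> x != v -> y x != 0 -> 1 <= nbr x.
Proof.
move=> xN xv yx; have [p pN /andP[exp _]] := y_parent xv yx.
by rewrite /nbr (bigD1 p) //= exp lerDl sumr_ge0 // => b _; rewrite ler0n.
Qed.

Lemma parent_bound :
  Q * \sum_(x in N | x != v) y x ^+ 2 <= \sum_(x in N) \sum_(b in N) (e x b)%:R * (y x * y b).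
Proof.
have term_ge0 x b : 0 <= (e x b)%:R * (y x * y b) by rewrite mulr_ge0 ?mulr_ge0.
rewrite mulr_sumr [X in _ <= X](bigD1 v) //= -[X in X <= _]add0r.
apply: lerD; first exact: sumr_ge0.
apply: ler_sum => x /andP[xN xv]; have [->|yx] := eqVneq (y x) 0.
  by rewrite expr2 mul0r mulr0 sumr_ge0 // => b _; rewrite mul0r mulr0.
have [p pN /andP[exp Qyp]] := y_parent xv yx.
rewrite (bigD1 p) //= exp mul1r -[X in X <= _]addr0 lerD ?sumr_ge0 //.
by rewrite expr2 mulrA [Q * _]mulrC -mulrA ler_wpM2l.
Qed.

Lemma cross_bound :
  \sum_(x in N) \sum_(b in N) (e x (s b))%:R * (y x * y b)
    <= (e v (s v))%:R + \sum_(x in N | x != v) cross x * y x ^+ 2.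
Proof.
(* The only cross edge at v that carries weight is v ~ v'. *)
pose y' x := if x == v then 0 else y x.
have split_v x b : x \in N -> b \in N -> (e x (s b))%:R * (y x * y b) =
    ((x == v) && (b == v))%:R * (e v (s v))%:R + (e x (s b))%:R * (y' x * y' b).
  move=> xN bN; rewrite /y'; case: (eqVneq x v) => [->|xv]; case: (eqVneq b v) => [->|bv] /=.
  - by rewrite y_v !mulr0 addr0 !mulr1 mul1r.
  - case evb: (e v (s b)); last by rewrite !mul0r add0r.
    by rewrite (y_sigma_nbr bv evb) !mulr0 mul0r add0r.
  - rewrite (hom_involution_swap esym sK s_hom).
    case exv: (e v (s x)); last by rewrite !mul0r add0r.
    by rewrite (y_sigma_nbr xv exv) !mul0r add0r.
  - by rewrite mul0r add0r.
rewrite (eq_bigr _ (fun x xN => eq_bigr _ (fun b bN => split_v x b xN bN))).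
rewrite (eq_bigr _ (fun x _ => big_split _ _ _ _ _)) big_split /=.
rewrite (sum_delta2 (fun _ _ => (e v (s v))%:R)) //.
rewrite lerD2l; apply: le_trans (sum_sym_form_le _ _ _ _) _.
- by move=> x b; rewrite (hom_involution_swap esym sK s_hom).
- by move=> x b; exact: ler0n.
rewrite (bigD1 v) //= {1}/y' eqxx expr0n mulr0 add0r.
by apply: ler_sum => x /andP[_ /negbTE xv]; rewrite /y' xv.
Qed.

Let deg_excessE x : (deg_in e (N :|: s @: N) x)%:R - 1 = (nbr x - 1) + cross x :> R.
Proof. by rewrite deg_in_involution // addrAC. Qed.

Let nbr_excess_ge0 x : x \in N -> x != v -> 0 <= (nbr x - 1) * y x ^+ 2.
Proof.
move=> xN xv; have [->|yx] := eqVneq (y x) 0; first by rewrite expr2 !mulr0.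
by rewrite mulr_ge0 ?sqr_ge0 // subr_ge0 nbr_ge1.
Qed.

Lemma deg_excess_ge0 :
  0 <= \sum_(x in N | x != v) ((deg_in e (N :|: s @: N) x)%:R - 1) * y x ^+ 2.
Proof.
apply: sumr_ge0 => x /andP[xN xv]; rewrite deg_excessE mulrDl.
by rewrite addr_ge0 ?nbr_excess_ge0 // mulr_ge0 ?sqr_ge0 ?sumr_ge0 // => b _; rewrite ler0n.
Qed.

Let den_gt0 : 0 < \sum_(x in N) y x ^+ 2.
Proof.
by rewrite (bigD1 v) //= y_v expr1n ltr_wpDr ?sumr_ge0 // => x _; rewrite sqr_ge0.
Qed.

Lemma lambda2_bound_le : lambda2_bound e s N v y Q <= Q.
Proof.
by rewrite lerBlDr lerDl divr_ge0 ?addr_ge0 ?deg_excess_ge0 ?sumr_ge0 // => x _;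
  rewrite sqr_ge0.
Qed.

Lemma lambda2_bound_mul_le :
  lambda2_bound e s N v y Q * \sum_(x in N) y x ^+ 2 <=
    \sum_(x in N) \sum_(b in N) ((e x b)%:R - (e x (s b))%:R) * (y x * y b) + Q * y v ^+ 2.
Proof.
rewrite /lambda2_bound; set K := \sum_(x in N | x != v) _; set den := \sum_(x in N) y x ^+ 2.
have denE : den = 1 + \sum_(x in N | x != v) y x ^+ 2.
  by rewrite /den (bigD1 v) //= y_v expr1n.
have KE : K = \sum_(x in N | x != v) (nbr x - 1) * y x ^+ 2
              + \sum_(x in N | x != v) cross x * y x ^+ 2.
  by rewrite -big_split; apply: eq_bigr => x _; rewrite deg_excessE mulrDl.
have nbr_excess : 0 <= \sum_(x in N | x != v) (nbr x - 1) * y x ^+ 2.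
  by apply: sumr_ge0 => x /andP[xN xv]; exact: nbr_excess_ge0.
have -> : \sum_(x in N) \sum_(b in N) ((e x b)%:R - (e x (s b))%:R) * (y x * y b) =
    \sum_(x in N) \sum_(b in N) (e x b)%:R * (y x * y b)
    - \sum_(x in N) \sum_(b in N) (e x (s b))%:R * (y x * y b).
  rewrite -sumrB; apply: eq_bigr => x _.
  by rewrite -sumrB; apply: eq_bigr => b _; rewrite mulrBl.
have evv : (e v (s v))%:R <= 1 :> R by rewrite lern1 leq_b1.
have := parent_bound; have := cross_bound.
rewrite mulrBl divfK ?gt_eqF // y_v expr1n mulr1 denE KE.
move: nbr_excess evv; rewrite mulrDr mulr1; lra.
Qed.

End TestVector.

(** * The Hamiltonian *)

Section Hamiltonian.
Variables (R : numDomainType) (n : nat) (e : rel 'I_n) (s : 'I_n -> 'I_n).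
Variables (v : 'I_n) (Q : R) (N : {set 'I_n}).
Hypotheses (esym : symmetric e) (eirr : irreflexive e) (sK : involutive s).
Hypotheses (s_hom : forall a b, e a b -> e (s a) (s b)) (sv : s v != v).
Hypotheses (sN : forall x, x \in N -> s x \notin N) (vN : v \in N).
Local Notation H := (Hmx e s v Q).

Lemma Hmx_entry i j :
  H i j = (e i j)%:R + ((i == j) && ((i == v) || (i == s v)))%:R * Q.
Proof. by rewrite !mxE. Qed.

Lemma Hmx_tr : H^T = H.
Proof.
by apply/matrixP => i j; rewrite mxE !Hmx_entry esym; case: (eqVneq i j) => [->|].
Qed.

Lemma Hmx_sigma i j : H (s i) (s j) = H i j.
Proof.
have s_inj : injective s := inv_inj sK.
rewrite !Hmx_entry (inj_eq s_inj) -[s i == v](inj_eq s_inj) sK (inj_eq s_inj) orbC.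
by have -> : e (s i) (s j) = e i j by apply/idP/idP => [/s_hom|/s_hom //]; rewrite !sK.
Qed.

Lemma Hmx_odd_form f :
  (odd_ext s N f *m H *m (odd_ext s N f)^T) 0 0 =
    (\sum_(x in N) \sum_(b in N) ((e x b)%:R - (e x (s b))%:R) * (f x * f b)
     + Q * f v ^+ 2) *+ 2.
Proof.
rewrite form_odd_ext //; last exact: Hmx_sigma.
have Hdiff x b : x \in N -> b \in N -> H x b - H x (s b) =
    ((e x b)%:R - (e x (s b))%:R) + ((x == v) && (b == v))%:R * Q.
  move=> xN bN; have xs c : c \in N -> (x == s c) = false.
    by move=> cN; apply: contraNF (sN cN) => /eqP <-.
  rewrite !Hmx_entry (xs v) // (xs b) // !orbF andFb mul0r addr0 addrAC.
  by case: (eqVneq x v) => [->|]; rewrite ?andbF // andbT eq_sym.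
congr (_ *+ 2).
under eq_bigr => x xN do under eq_bigr => b bN do rewrite Hdiff // mulrDl -mulrA.
rewrite (eq_bigr _ (fun x _ => big_split _ _ _ _ _)) big_split /=.
by rewrite (sum_delta2 (fun x b => Q * (f x * f b))) // expr2.
Qed.

Lemma Hmx_pair_form :
  (pair_row R v (s v) *m H *m (pair_row R v (s v))^T) 0 0 = (Q + (e v (s v))%:R) *+ 2.
Proof.
rewrite form_pair_row 1?eq_sym // !Hmx_entry !eqxx orbT (negbTE sv) eq_sym (negbTE sv).
by rewrite !eirr esym /=; ring.
Qed.

End Hamiltonian.

(** * Two test vectors bound the second eigenvalue *)

Lemma eig_desc1_ge (R : realDomainType) (s : seq R) (c : R) :
  (1 < count (fun a : R => (c <= a)%R) s)%N -> c <= eig_desc s 1.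
Proof.
rewrite /eig_desc -(permP (permEl (perm_sort (fun a b : R => b <= a) s))).
have : sorted (fun a b : R => b <= a) (sort (fun a b : R => b <= a) s).
  by apply: sort_sorted => a b; exact: le_total.
case: sort => [|a [|b t]] //=; first by case: (c <= a).
have ge_trans : transitive (fun a b : R => b <= a).
  by move=> y x z xy yz; exact: le_trans yz xy.
case/andP=> _ /(order_path_min ge_trans) tb.
apply: contraTT; rewrite -ltNge => bc.
have -> : count (fun a : R => (c <= a)%R) t = 0%N.
  rewrite -(count_pred0 t); apply: eq_in_count => x /(allP tb) xb /=.
  by apply/negbTE; rewrite -ltNge (le_lt_trans xb bc).
by rewrite (leNgt c b) bc; case: (c <= a)%R.
Qed.

Lemma char_poly_similar (R : comUnitRingType) n (P D : 'M[R]_n) :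
  P \in unitmx -> char_poly (invmx P *m D *m P) = char_poly D.
Proof.
move=> Pu; rewrite /char_poly.
have hX : map_mx polyC (invmx P) *m 'X%:M *m map_mx polyC P = 'X%:M.
  by rewrite mul_mx_scalar -scalemxAl -map_mxM mulVmx // map_mx1 scalemx1.
have -> : char_poly_mx (invmx P *m D *m P) =
  map_mx polyC (invmx P) *m char_poly_mx D *m map_mx polyC P.
  by rewrite /char_poly_mx mulmxBr mulmxBl -!map_mxM hX.
rewrite !det_mulmx mulrAC !det_map_mx -rmorphM -det_mulmx mulVmx //.
by rewrite det1 rmorph1 mul1r.
Qed.

Lemma char_poly_diag (R : comNzRingType) n (d : 'rV[R]_n) :
  char_poly (diag_mx d) = \prod_(i < n) ('X - (d 0 i)%:P).
Proof.
rewrite char_poly_trig ?diag_mx_is_trig //.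
by apply: eq_bigr => i _; rewrite mxE eqxx mulr1n.
Qed.

Local Open Scope sesquilinear_scope.

Lemma form_lin_comb (C : numClosedFieldType) n (B : 'M[C]_n) (u w : 'rV[C]_n) (a b : C) :
  ((a *: u + b *: w) *m B *m (a *: u + b *: w)^t*) 0 0 =
  a * a^* * (u *m B *m u^t*) 0 0 + a * b^* * (u *m B *m w^t*) 0 0
  + (b * a^* * (w *m B *m u^t*) 0 0 + b * b^* * (w *m B *m w^t*) 0 0).
Proof.
rewrite linearD /= !linearZ /= map_mxD !map_mxZ /=.
by rewrite !mulmxDl !mulmxDr -!scalemxAl -!scalemxAr !scalerA !mxE.
Qed.

Lemma form_unitary_diag (C : numClosedFieldType) n (P : 'M[C]_n) (d x : 'rV[C]_n) :
  P \is unitarymx ->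
  (x *m (invmx P *m diag_mx d *m P) *m x^t*) 0 0 =
    \sum_i d 0 i * ((x *m P^t*) 0 i * ((x *m P^t*) 0 i)^*).
Proof.
move=> Pu; rewrite invmx_unitary // !mulmxA -mulmxA.
have -> : P *m x^t* = (x *m P^t*)^t* by rewrite trmx_mul map_mxM trmxCK.
rewrite mul_mx_diag !mxE; apply: eq_bigr => i _; rewrite !mxE.
by rewrite mulrAC mulrC.
Qed.

Lemma orthogonal_comb_eq0 (C : numClosedFieldType) n (u w : 'rV[C]_n) (a b : C) :
  u != 0 -> w != 0 -> (u *m w^t*) 0 0 = 0 -> (w *m u^t*) 0 0 = 0 ->
  a *: u + b *: w = 0 -> a = 0 /\ b = 0.
Proof.
move=> u0 w0 uw wu abuw.
have coef (z : 'rV[C]_n) : ((a *: u + b *: w) *m z^t*) 0 0 =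
    a * (u *m z^t*) 0 0 + b * (w *m z^t*) 0 0.
  have combE (U V : 'M[C]_1) : (a *: U + b *: V) 0 0 = a * U 0 0 + b * V 0 0.
    by rewrite !mxE.
  by rewrite mulmxDl -!scalemxAl combE.
have := coef u; have := coef w.
rewrite abuw !mul0mx [(0 : 'M_1) 0 0]mxE uw wu !mulr0 addr0 add0r.
move=> /esym/eqP; rewrite mulf_eq0 -(dotmxE w w) dnorm_eq0 (negbTE w0) orbF => /eqP ->.
by move=> /esym/eqP; rewrite mulf_eq0 -(dotmxE u u) dnorm_eq0 (negbTE u0) orbF => /eqP.
Qed.

Lemma diag_form_lt (C : numClosedFieldType) n (d y : 'rV[C]_n) (c : C) (j : 'I_n) :
  (forall i, i != j -> d 0 i < c) -> y 0 j = 0 -> y != 0 ->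
  \sum_i d 0 i * (y 0 i * (y 0 i)^*) < c * \sum_i y 0 i * (y 0 i)^*.
Proof.
move=> d_lt yj y0; have [i0 yi0] : exists i0, y 0 i0 != 0.
  apply/existsP; apply: contraNT y0 => /existsPn y0.
  by apply/eqP/rowP => k; rewrite [RHS]mxE; apply/eqP; exact: negbNE (y0 k).
have i0j : i0 != j by apply: contraNneq yi0 => ->; rewrite yj.
rewrite mulr_sumr (bigD1 i0) // [X in _ < X](bigD1 i0) //=.
apply: ltr_leD; first by rewrite ltr_pM2r ?mul_conjC_gt0 ?d_lt.
apply: ler_sum => i _; have [->|ij] := eqVneq i j; first by rewrite yj mul0r !mulr0.
by rewrite ler_wpM2r ?mul_conjC_ge0 // ltW ?d_lt.
Qed.

Lemma two_eigenvalues_ge (C : numClosedFieldType) n (P : 'M[C]_n) (d : 'rV[C]_n)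
  (u w : 'rV[C]_n) (c : C) :
  let A := invmx P *m diag_mx d *m P in
  P \is unitarymx -> (forall i, d 0 i \is Num.real) -> c \is Num.real ->
  u != 0 -> w != 0 ->
  (u *m w^t*) 0 0 = 0 -> (w *m u^t*) 0 0 = 0 ->
  (u *m A *m w^t*) 0 0 = 0 -> (w *m A *m u^t*) 0 0 = 0 ->
  c * (u *m u^t*) 0 0 <= (u *m A *m u^t*) 0 0 ->
  c * (w *m w^t*) 0 0 <= (w *m A *m w^t*) 0 0 ->
  (1 < #|[set i | (c <= d 0 i)%R]|)%N.
Proof.
move: P d u w; case: n => [|n] P d u w A Pu dreal creal u0;
  first by rewrite (thinmx0 u) eqxx in u0.
move=> w0 uw wu uAw wAu uAu wAw.
rewrite ltnNge; apply/negP => /card_le1_eqP dle1.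
have [j d_lt] : exists j : 'I_n.+1, forall i, i != j -> d 0 i < c.
  suff [j hj] : exists j : 'I_n.+1, forall i, c <= d 0 i -> i = j.
    by exists j => i; apply: contraNT; rewrite -real_leNgt // => /hj ->.
  case: (pickP [pred i | c <= d 0 i]) => [j /= dj | dlt].
    by exists j => i di; apply: dle1; rewrite inE.
  by exists ord0 => i ci; move: (dlt i); rewrite /= ci.
(* A nonzero combination of u and w whose j-th spectral coordinate vanishes. *)
set a := (u *m P^t*) 0 j; set b := (w *m P^t*) 0 j.
have [al [be [albe0 coord_j]]] :
    exists al be : C, ((al != 0) || (be != 0)) /\ al * a + be * b = 0.
  have [/andP[/eqP -> /eqP ->]|ab] := boolP ((a == 0) && (b == 0)).
    by exists 1, 0; rewrite oner_eq0 !mulr0 addr0.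
  exists b, (- a); split; first by move: ab; rewrite negb_and oppr_eq0 orbC.
  by rewrite mulNr mulrC subrr.
set x := al *: u + be *: w; set y := x *m P^t*.
have yj : y 0 j = 0.
  have combE (U V : 'rV[C]_n.+1) : (al *: U + be *: V) 0 j = al * U 0 j + be * V 0 j.
    by rewrite !mxE.
  by rewrite /y /x mulmxDl -!scalemxAl combE.
have y_neq0 : y != 0.
  apply: contraTneq albe0 => y0; rewrite negb_or !negbK.
  have PtP : P^t* *m P = 1%:M by rewrite -invmx_unitary // mulVmx ?unitarymx_unit.
  have x0 : x = 0 by rewrite -[x]mulmx1 -PtP mulmxA -/y y0 mul0mx.
  by have [-> ->] := orthogonal_comb_eq0 u0 w0 uw wu x0; rewrite eqxx.
have xx : (x *m x^t*) 0 0 = \sum_i y 0 i * (y 0 i)^*.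
  have := form_unitary_diag (const_mx 1) x Pu.
  rewrite diag_const_mx mulmx1 mulVmx ?unitarymx_unit // mulmx1 => ->.
  by apply: eq_bigr => i _; rewrite mxE mul1r.
have low : c * (x *m x^t*) 0 0 <= (x *m A *m x^t*) 0 0.
  have := form_lin_comb 1%:M u w al be; rewrite !mulmx1 -/x => ->.
  rewrite form_lin_comb uAw wAu uw wu !mulr0 !addr0 !add0r mulrDr.
  by apply: lerD; rewrite mulrCA ler_wpM2l // mul_conjC_ge0.
have := diag_form_lt d_lt yj y_neq0.
by rewrite -xx -form_unitary_diag // => /lt_le_trans/(_ low); rewrite ltxx.
Qed.

Lemma map_real_complex_trC (R : rcfType) m n (Y : 'M[R]_(m, n)) :
  (map_mx (real_complex R) Y)^t* = map_mx (real_complex R) Y^T.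
Proof. by apply/matrixP => i j; rewrite !mxE; exact: conjc_real. Qed.

Lemma symmetric_spectral_real (R : rcfType) n (H : 'M[R]_n) : H^T = H ->
  exists r : 'I_n -> R, exists2 P : 'M[R[i]]_n, P \is unitarymx &
    map_mx (real_complex R) H = invmx P *m diag_mx (\row_i (r i)%:C%C) *m P.
Proof.
move=> Hsym; set A := map_mx (real_complex R) H.
have Aherm : A \is hermsymmx.
  by apply/is_hermitianmxP; rewrite expr0 scale1r /A map_real_complex_trC Hsym.
have /orthomx_spectralP Aeq := hermitian_normalmx Aherm.
have /mxOverP dreal := hermitian_spectral_diag_real Aherm.
exists (fun i => complex.Re (spectral_diag A 0 i)), (spectralmx A).
  exact: spectral_unitarymx.
rewrite {1}Aeq; congr (_ *m diag_mx _ *m _); apply/rowP => i; rewrite mxE.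
by have := dreal 0 i; case: (spectral_diag A 0 i) => re im; rewrite complex_real => /eqP /= ->.
Qed.

Lemma spectral_is_spectrum (R : rcfType) n (H : 'M[R]_n) (r : 'I_n -> R) (P : 'M[R[i]]_n) :
  P \is unitarymx ->
  map_mx (real_complex R) H = invmx P *m diag_mx (\row_i (r i)%:C%C) *m P ->
  is_spectrum H [seq r i | i <- enum 'I_n].
Proof.
move=> Pu HE; apply: (map_poly_inj (real_complex R)).
rewrite map_char_poly HE char_poly_similar ?unitarymx_unit // char_poly_diag.
rewrite map_prod_XsubC big_map big_enum /=.
by apply: eq_bigr => i _; rewrite mxE.
Qed.

Lemma form_symmetric (R : comNzRingType) n (M : 'M[R]_n) (X Y : 'rV[R]_n) :
  M^T = M -> (X *m M *m Y^T) 0 0 = (Y *m M *m X^T) 0 0.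
Proof.
move=> Msym; transitivity ((X *m M *m Y^T)^T 0 0); first by rewrite [RHS]mxE.
by rewrite !trmx_mul trmxK Msym mulmxA.
Qed.

Lemma eig_desc1_ge_rayleigh (R : rcfType) n (H : 'M[R]_n) (s : seq R)
  (u w : 'rV[R]_n) (c : R) :
  H^T = H -> is_spectrum H s -> u != 0 -> w != 0 ->
  (u *m w^T) 0 0 = 0 -> (u *m H *m w^T) 0 0 = 0 ->
  c * (u *m u^T) 0 0 <= (u *m H *m u^T) 0 0 ->
  c * (w *m w^T) 0 0 <= (w *m H *m w^T) 0 0 ->
  c <= eig_desc s 1.
Proof.
move=> Hsym Hs u0 w0 uw uHw uu wHw.
have [r [P Pu HE]] := symmetric_spectral_real Hsym.
have s_perm : perm_eq s [seq r i | i <- enum 'I_n].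
  by apply: prod_XsubC_eq; rewrite -Hs (spectral_is_spectrum Pu HE).
apply: eig_desc1_ge; rewrite (permP s_perm) count_map.
have -> : count (preim r (fun a => c <= a)) (enum 'I_n) = #|[set i | c <= r i]|.
  rewrite cardsE cardE /enum_mem size_filter count_filter.
  by apply: eq_count => i; rewrite /= andbT.
pose toC := map_mx (real_complex R) : 'rV_n -> 'rV_n.
have formC (X Y : 'rV[R]_n) (M : 'M[R]_n) :
  (toC X *m map_mx (real_complex R) M *m (toC Y)^t*) 0 0 = ((X *m M *m Y^T) 0 0)%:C%C.
  by rewrite map_real_complex_trC -!map_mxM mxE.
have dotC (X Y : 'rV[R]_n) : (toC X *m (toC Y)^t*) 0 0 = ((X *m Y^T) 0 0)%:C%C.
  by rewrite -[toC X]mulmx1 -(map_mx1 (real_complex R)) formC mulmx1.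
have toC_eq0 (X : 'rV[R]_n) : (toC X == 0) = (X == 0) by rewrite map_mx_eq0.
have wu : (w *m u^T) 0 0 = 0 by rewrite -[w]mulmx1 form_symmetric ?trmx1 // mulmx1.
have wHu : (w *m H *m u^T) 0 0 = 0 by rewrite form_symmetric.
have dreal i : (\row_i (r i)%:C%C) 0 i \is Num.real by rewrite mxE complex_real.
have -> : [set i | c <= r i] = [set i | c%:C%C <= (\row_i (r i)%:C%C) 0 i].
  by apply/setP => i; rewrite !inE mxE lecR.
have := two_eigenvalues_ge (u := toC u) (w := toC w) (c := c%:C%C) Pu dreal.
rewrite /= -HE !formC !dotC !toC_eq0 uw wu uHw wHu -!rmorphM !lecR complex_real.
by apply.
Qed.

Theorem theorem5 (R : rcfType) (n : nat) (e : rel 'I_n) (sigma : 'I_n -> 'I_n)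
  (v : 'I_n) (Q : R) (N : {set 'I_n}) :
  simple_graph e -> connected_graph e -> graph_involution e sigma ->
  sigma v != v ->
  2 * (max_degree e)%:R < Q -> 1 <= Q ->
  (* N contains exactly one vertex of each pair {x, x'} with x' <> x, and no fixed vertex *)
  (forall x, x \in N -> sigma x != x) ->
  (forall x, sigma x != x -> (x \in N) (+) (sigma x \in N)) ->
  v \in N ->
  (forall x, sigma x != x -> (dist e v x < dist e (sigma v) x)%N -> x \in N) ->
  let y := fun x : 'I_n =>
    if (dist e v x < dist e (sigma v) x)%N then Q ^- dist e v x else 0 in
  let NsN := N :|: (sigma @: N) in
  (exists s, is_spectrum (Hmx e sigma v Q) s) /\
  (forall s, is_spectrum (Hmx e sigma v Q) s ->
     Q - (1 + \sum_(x in N | x != v) ((deg_in e NsN x)%:R - 1) * y x ^+ 2)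
           / (\sum_(x in N) y x ^+ 2)
     <= eig_desc s 1).
Proof.
move=> [esym eirr] _ [sK s_hom] sv _ Q_ge1 N_fix N_xor vN N_closed y NsN.
have sN x : x \in N -> sigma x \notin N.
  by move=> xN; have := N_xor x (N_fix x xN); rewrite xN.
have Hsym : (Hmx e sigma v Q)^T = Hmx e sigma v Q by exact: Hmx_tr.
split.
  have [r [P Pu HE]] := symmetric_spectral_real Hsym.
  by exists [seq r i | i <- enum 'I_n]; exact: spectral_is_spectrum Pu HE.
move=> sp Hsp; change (lambda2_bound e sigma N v y Q <= eig_desc sp 1).
have y_ge0 : forall x, 0 <= y x := dist_weight_ge0 e sigma v Q_ge1.
have y_v : y v = 1 := dist_weight_src e Q sv.
have y_parent := dist_weight_parent esym s_hom Q_ge1 N_closed.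
have y_nbr := dist_weight_sigma_nbr (v := v) Q sK s_hom.
have zs := odd_ext_sigma sK sN y; have ws := pair_row_sigma R sK v.
apply: (eig_desc1_ge_rayleigh Hsym Hsp _ _ (dot_odd_even sK zs ws)
          (form_odd_even sK (Hmx_sigma v Q sK s_hom) zs ws)).
- by apply/eqP => /rowP/(_ v); rewrite !mxE vN y_v => /eqP; rewrite oner_eq0.
- by apply/eqP => /rowP/(_ v); rewrite !mxE eqxx => /eqP; rewrite oner_eq0.
- rewrite dot_odd_ext // Hmx_odd_form // mulrnAr; apply: ler_wMn2r.
  exact: (lambda2_bound_mul_le esym sK s_hom sN vN y_ge0 y_v y_parent y_nbr).
- rewrite dot_pair_row 1?eq_sym // Hmx_pair_form // mulr_natr; apply: ler_wMn2r.
  by apply: le_trans (lambda2_bound_le sK sN y_parent) _; rewrite lerDl.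
Qed.
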